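(* Let $S=(P,L)$ be a finite $(2,t)$-generalized quadrangle and let $(R,\psi)$ be a faithful representation of $S$, with $\psi(x)=\langle r_x\rangle$ and $R_\psi=\{r_x:x\in P\}$. Assume that $(t,|R|)\neq(2,2^4)$. If $x,y\in P$ are distinct and $r_xr_y\in R_\psi$, then $x$ and $y$ are collinear.
   Context: A $(2,t)$-generalized quadrangle is a partial linear space in which every line has exactly $3$ points, every point lies on exactly $t+1$ lines, no point is collinear with all points, and for every point $x$ and line $\ell$ with $x\notin\ell$, $x$ is collinear with exactly one point of $\ell$. A representation $(R,\psi)$ of $S$ is a group $R$ with a map $\psi$ assigning to each point $x$ a subgroup $\psi(x)=\langle r_x\rangle$ of order $2$, such that $R$ is generated by the $r_x$ and, for every line $\{x,y,z\}$, $\{1,r_x,r_y,r_z\}$ is a Klein four subgroup. It is faithful if $\psi$ is injective. *)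

From mathcomp Require Import all_boot.
Set Implicit Arguments. Unset Strict Implicit. Unset Printing Implicit Defensive.

Section Geometry.
Variable P : finType.
Variable Lines : {set {set P}}.

(* x and y are collinear: some line contains both (reflexive on points lying
   on a line). *)
Definition collinear (x y : P) : bool :=
  [exists l in Lines, (x \in l) && (y \in l)].

Definition is_GQ2t (t : nat) : Prop :=
  (forall l1 l2, l1 \in Lines -> l2 \in Lines -> forall x y, x != y ->
      x \in l1 -> y \in l1 -> x \in l2 -> y \in l2 -> l1 = l2) /\
  (forall l, l \in Lines -> #|l| = 3) /\
  (forall x, #|[set l in Lines | x \in l]| = t.+1) /\
  (forall x, exists y, ~~ collinear x y) /\
  (forall x l, l \in Lines -> x \notin l -> #|[set y in l | collinear x y]| = 1).
End Geometry.

Section Groups.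
Variables (G : Type) (mul : G -> G -> G) (e : G) (inv : G -> G).

Definition is_group : Prop :=
  (forall a b c, mul a (mul b c) = mul (mul a b) c) /\
  (forall a, mul e a = a) /\
  (forall a, mul (inv a) a = e).

Inductive generated {I : Type} (r : I -> G) : G -> Prop :=
  | gen_one : generated r e
  | gen_gen i : generated r (r i)
  | gen_mul a b : generated r a -> generated r b -> generated r (mul a b)
  | gen_inv a : generated r a -> generated r (inv a).

Definition order_two (a : G) : Prop := a <> e /\ mul a a = e.

Definition klein_four (a b c : G) : Prop :=
  let S := fun g => g = e \/ g = a \/ g = b \/ g = c in
  [/\ [/\ a <> e, b <> e, c <> e & [/\ a <> b, a <> c & b <> c]],
      (forall g h, S g -> S h -> S (mul g h)),
      (forall g, S g -> S (inv g)) &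
      (forall g, S g -> mul g g = e)].

Definition has_card (n : nat) : Prop := exists f : G -> 'I_n, bijective f.
End Groups.

(* Representation (R, psi) of the geometry with psi(x) = <r x>. The group R is
   the whole carrier G (which must be generated by the r x). *)
Definition is_representation (P : finType) (Lines : {set {set P}})
  (G : Type) (mul : G -> G -> G) (e : G) (inv : G -> G) (r : P -> G) : Prop :=
  [/\ is_group mul e inv,
      (forall x, order_two mul e (r x)),
      (forall g, generated mul e inv r g) &
      (forall l, l \in Lines -> forall x y z, x \in l -> y \in l -> z \in l ->
         x != y -> y != z -> x != z -> klein_four mul e inv (r x) (r y) (r z))].

(* faithful: psi injective, i.e. x |-> <r x> injective, i.e. r injective *)
Definition is_faithful (P : finType) (G : Type) (r : P -> G) : Prop :=
  injective r.

From mathcomp Require Import all_boot.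
From Stdlib Require Import ClassicalEpsilon.

(* Suppose x and y are not collinear and r_x r_y = r_z.  Since the product of
   two collinear points is the third point of their line, the GQ axiom shows
   that z is collinear with neither x nor y but with every point of the trace
   {x, y}^perp, that a point collinear with none of x, y, z is collinear with
   the whole trace, and that the trace is closed under products.  A point u of
   the trace sees the pairwise non-collinear x, y, z on three distinct lines,
   so t >= 2; a fourth line through u would carry two points collinear with a
   second point of the trace, a triangle, so t = 2.  Then the trace consists of
   u1, u2 and the point u3 with r_u3 = r_u1 r_u2, and every point is collinear
   with x, y or z.  Hence every r_p, and so R, lies in the group generated by
   the commuting involutions r_x, r_y, r_u1, r_u2, whose nontrivial
   subproducts are never 1: |R| = 16. *)

Set Implicit Arguments.
Unset Strict Implicit.
Unset Printing Implicit Defensive.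

Definition pairop (A B : Type) (opA : A -> A -> A) (opB : B -> B -> B)
  (p q : A * B) : A * B :=
  (opA p.1 q.1, opB p.2 q.2).

(* [quad] indexes the 16 subproducts of four commuting involutions, [xor4]
   being the corresponding group law. *)
Definition quad := ((bool * bool) * (bool * bool))%type.
Definition xor2 := pairop addb addb.
Definition xor4 := pairop xor2 xor2.
Definition quad0 : quad := ((false, false), (false, false)).

Lemma xor4_eq0 (q q' : quad) : xor4 q q' = quad0 -> q = q'.
Proof. by move: q q' => [[[] []] [[] []]] [[[] []] [[] []]]. Qed.

Lemma xor4xx (q : quad) : xor4 q q = quad0.
Proof. by move: q => [[[] []] [[] []]]. Qed.

Lemma card_quad : #|{: quad}| = 16.
Proof. by rewrite !card_prod card_bool. Qed.

(* [G] is an arbitrary type, with no choice structure, so the group theory of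
   [monoid] does not apply to it: we derive the few laws we need. *)
Section GroupLaws.
Variables (G : Type) (mul : G -> G -> G) (e : G) (inv : G -> G).
Hypothesis group_G : is_group mul e inv.
Local Notation "a * b" := (mul a b).

Lemma mulgA : associative mul. Proof. by case: group_G. Qed.
Lemma mul1g : left_id e mul. Proof. by case: group_G => _ []. Qed.
Lemma mulVg a : inv a * a = e. Proof. by case: group_G => _ []. Qed.

Lemma mulgV a : a * inv a = e.
Proof.
by rewrite -[a * _]mul1g -(mulVg (inv a)) -mulgA (mulgA (inv a)) mulVg mul1g.
Qed.

Lemma mulg1 : right_id e mul.
Proof. by move=> a; rewrite -(mulVg a) mulgA mulgV mul1g. Qed.

Lemma mulgI a : injective (mul a).
Proof.
by move=> b c eq_ab_ac; rewrite -[b]mul1g -(mulVg a) -mulgA eq_ab_ac mulgA mulVg mul1g.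
Qed.

Lemma mulIg a : injective (mul^~ a).
Proof.
by move=> b c eq_ba_ca; rewrite -[b]mulg1 -(mulgV a) mulgA eq_ba_ca -mulgA mulgV mulg1.
Qed.

Lemma inv_involution a : a * a = e -> inv a = a.
Proof. by move=> aa; apply: (@mulIg a); rewrite mulVg aa. Qed.

Lemma involution_products a b c : a * a = e -> b * b = e -> c * c = e ->
  a * b = c -> [/\ b * a = c, a * c = b, c * a = b, b * c = a & c * b = a].
Proof.
move=> aa bb cc ab_c.
have ac_b : a * c = b by rewrite -ab_c mulgA aa mul1g.
have cb_a : c * b = a by rewrite -ab_c -mulgA bb mulg1.
have ba_c : b * a = c by apply: (@mulgI c); rewrite -{1}ab_c -mulgA (mulgA b) bb mul1g aa.
by split=> //; [rewrite -ba_c -mulgA aa mulg1 | rewrite -ba_c mulgA bb mul1g].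
Qed.

Definition commuting a b := a * b = b * a.

Lemma commuting_sym a b : commuting a b -> commuting b a.
Proof. by []. Qed.

Lemma commutingMl a b c : commuting a c -> commuting b c -> commuting (a * b) c.
Proof. by move=> ac bc; rewrite /commuting -mulgA bc mulgA ac -mulgA. Qed.

Lemma mulgACA a b c d : commuting b c -> (a * b) * (c * d) = (a * c) * (b * d).
Proof. by move=> bc; rewrite -mulgA (mulgA b) bc -mulgA !mulgA. Qed.

Definition powb a (b : bool) := if b then a else e.

Lemma powbD a : a * a = e -> {morph powb a : b b' / b (+) b' >-> b * b'}.
Proof. by move=> aa [] [] /=; rewrite ?mulg1 ?mul1g. Qed.

Lemma commuting_powb a a' b b' : commuting a a' -> commuting (powb a b) (powb a' b').
Proof. by case: b; case: b' => //= _; rewrite /commuting mulg1 mul1g. Qed.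

Definition prodf (A B : Type) (f : A -> G) (g : B -> G) (p : A * B) := f p.1 * g p.2.

Lemma prodfM (A B : Type) (opA : A -> A -> A) (opB : B -> B -> B) f g :
  {morph f : p p' / opA p p' >-> p * p'} -> {morph g : q q' / opB q q' >-> q * q'} ->
  (forall p q, commuting (g q) (f p)) ->
  {morph prodf f g : pq pq' / pairop opA opB pq pq' >-> pq * pq'}.
Proof. by move=> fM gM fg [p q] [p' q']; rewrite /prodf /= mulgACA // fM gM. Qed.

Lemma xor4_morph_inj (f : quad -> G) : {morph f : q q' / xor4 q q' >-> q * q'} ->
  (forall q, f q = e -> q = quad0) -> injective f.
Proof.
move=> fM ker1 q q' eq_f; apply/xor4_eq0/ker1.
have f0 : f quad0 = e.
  by apply: (@mulgI (f quad0)); rewrite -fM xor4xx mulg1.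
by rewrite fM eq_f -fM xor4xx.
Qed.

Section ElementaryAbelian.
Variables a b c d : G.
Hypotheses (aa : a * a = e) (bb : b * b = e) (cc : c * c = e) (dd : d * d = e).
Hypotheses (ab : commuting a b) (ac : commuting a c) (ad : commuting a d)
  (bc : commuting b c) (bd : commuting b d) (cd : commuting c d).

Definition pair_prod x y : bool * bool -> G := prodf (powb x) (powb y).
Definition span4 : quad -> G := prodf (pair_prod a b) (pair_prod c d).

Lemma span4M : {morph span4 : q q' / xor4 q q' >-> q * q'}.
Proof.
apply: prodfM; try apply: prodfM; try apply: powbD => //.
- by move=> *; apply/commuting_powb/commuting_sym.
- by move=> *; apply/commuting_powb/commuting_sym.
move=> [p1 p2] [q1 q2]; rewrite /commuting /pair_prod /prodf /=.
by apply: commutingMl; apply/commuting_sym/commutingMl; apply: commuting_powb.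
Qed.

Lemma span4_0 : span4 quad0 = e.
Proof. by rewrite /span4 /pair_prod /prodf /= !mulg1. Qed.

End ElementaryAbelian.
End GroupLaws.

Lemma has_card_bijection (G : Type) (T : finType) (f : T -> G) :
  injective f -> (forall g, exists q, g = f q) -> has_card G #|T|.
Proof.
move=> f_inj f_surj.
pose f_inv g := proj1_sig (constructive_indefinite_description _ (f_surj g)).
have f_invK g : g = f (f_inv g) by rewrite /f_inv; case: constructive_indefinite_description.
exists (fun g => enum_rank (f_inv g)), (fun i => f (enum_val i)) => [g | i].
  by rewrite enum_rankK -f_invK.
by rewrite -[in RHS](enum_valK i); congr enum_rank; apply/f_inj; rewrite -f_invK.
Qed.

Section GeneralizedQuadrangle.
Variables (P : finType) (Lines : {set {set P}}) (t : nat).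
Hypothesis gq : is_GQ2t Lines t.
Local Notation col := (collinear Lines).

Definition pencil (c : P) := [set l in Lines | c \in l].
Definition trace (x y : P) := [set u | col x u & col y u].

Lemma traceP x y u : reflect (col x u /\ col y u) (u \in trace x y).
Proof. by rewrite inE; apply: andP. Qed.

Lemma traceC x y : trace x y = trace y x.
Proof. by apply/setP => v; rewrite !inE andbC. Qed.

Lemma line_uniq l l' x y : l \in Lines -> l' \in Lines -> x != y ->
  x \in l -> y \in l -> x \in l' -> y \in l' -> l = l'.
Proof. by move=> l_line l'_line xy; case: gq => uniq_l _; apply: uniq_l. Qed.

Lemma card_line l : l \in Lines -> #|l| = 3.
Proof. by case: gq => _ [card_l _]; apply: card_l. Qed.

Lemma card_pencil c : #|pencil c| = t.+1.
Proof. by case: gq => _ [_ [card_p _]]; apply: card_p. Qed.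

Lemma collinearP x y :
  reflect (exists l, [/\ l \in Lines, x \in l & y \in l]) (col x y).
Proof.
apply: (iffP existsP) => [[l /and3P [] ] | [l [? ? ?]]]; first by exists l.
by exists l; apply/and3P.
Qed.

Lemma line_collinear l x y : l \in Lines -> x \in l -> y \in l -> col x y.
Proof. by move=> *; apply/collinearP; exists l. Qed.

Lemma collinearC x y : col x y = col y x.
Proof. by apply/collinearP/collinearP => -[l [? ? ?]]; exists l. Qed.

Lemma collinear_refl x : col x x.
Proof.
have /card_gt0P [l] : 0 < #|pencil x| by rewrite card_pencil.
by rewrite inE => /andP [l_line x_l]; apply: (line_collinear l_line).
Qed.

Lemma gq_collinear_uniq x l a b : l \in Lines -> x \notin l ->
  a \in l -> b \in l -> col x a -> col x b -> a = b.
Proof.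
case: gq => _ [_ [_ [_ gq_ax]]] l_line x_l a_l b_l xa xb.
have /eqP /cards1P [y def_y] := gq_ax x l l_line x_l.
have : a \in [set y in l | col x y] by rewrite inE a_l xa.
have : b \in [set y in l | col x y] by rewrite inE b_l xb.
by rewrite def_y !inE => /eqP -> /eqP ->.
Qed.

Lemma gq_collinear_exists x l : l \in Lines -> x \notin l ->
  exists2 y, y \in l & col x y.
Proof.
case: gq => _ [_ [_ [_ gq_ax]]] l_line x_l.
have /card_gt0P [y] : 0 < #|[set y in l | col x y]| by rewrite gq_ax.
by rewrite inE => /andP [y_l xy]; exists y.
Qed.

Lemma notin_line x l p : l \in Lines -> p \in l -> ~~ col x p -> x \notin l.
Proof. by move=> l_line p_l; apply: contra => x_l; apply: (line_collinear l_line). Qed.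

Lemma line_third_point l p q : l \in Lines -> p \in l -> q \in l -> p != q ->
  exists w, [/\ w \in l, w != p & w != q].
Proof.
move=> l_line p_l q_l pq.
have /card_gt0P [w] : 0 < #|l :\ p :\ q|.
  move: (card_line l_line); rewrite (cardsD1 p) p_l (cardsD1 q) !inE eq_sym pq q_l.
  by case; rewrite add0n => ->.
by rewrite !inE => /and3P [wq wp w_l]; exists w.
Qed.

Lemma line_other_points l c : l \in Lines -> c \in l ->
  exists p w, [/\ p \in l, w \in l, p != c, w != c & p != w].
Proof.
move=> l_line c_l; move: (card_line l_line).
rewrite (cardsD1 c) c_l add1n => -[] /eqP /cards2P [p [w [pw def_l]]].
have : (p \in l :\ c) && (w \in l :\ c) by rewrite def_l !inE !eqxx orbT.
by rewrite !inE => /andP [/andP [pc p_l] /andP [wc w_l]]; exists p, w.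
Qed.

Lemma triangle_on_line p q v : col p q -> col p v -> col q v ->
  p != q -> exists l, [/\ l \in Lines, p \in l, q \in l & v \in l].
Proof.
move=> /collinearP [l [l_line p_l q_l]] pv qv pq; exists l; split=> //.
apply: contraT => v_l; case/eqP: pq.
by apply: (gq_collinear_uniq l_line v_l); rewrite // collinearC.
Qed.

Section Trace.
Variables x y : P.
Hypothesis nxy : ~~ col x y.

Lemma trace_neql u : u \in trace x y -> u != x.
Proof. by case/traceP=> _ yu; apply: (contraNneq _ nxy) => <-; rewrite collinearC. Qed.

Lemma trace_neqr u : u \in trace x y -> u != y.
Proof. by case/traceP=> xu _; apply: (contraNneq _ nxy) => <-. Qed.

Lemma trace_collinear u v : u \in trace x y -> v \in trace x y -> col u v -> u = v.
Proof.
move=> /traceP [xu yu] /traceP [xv yv] /collinearP [l [l_line u_l v_l]].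
have [x_l | x_l] := boolP (x \in l); last exact: (gq_collinear_uniq l_line x_l).
have y_l : y \notin l by apply: (notin_line l_line x_l); rewrite collinearC.
exact: (gq_collinear_uniq l_line y_l).
Qed.

Lemma trace_exists : exists u, u \in trace x y.
Proof.
have /card_gt0P [l] : 0 < #|pencil y| by rewrite card_pencil.
rewrite inE => /andP [l_line y_l].
have [u u_l xu] := gq_collinear_exists l_line (notin_line l_line y_l nxy).
by exists u; apply/traceP; split; last exact: (line_collinear l_line y_l u_l).
Qed.

Lemma trace_two u : 0 < t -> u \in trace x y -> exists2 v, v \in trace x y & v != u.
Proof.
move=> t_gt0 u_tr; have /traceP [xu _] := u_tr.
have /collinearP [l0 [l0_line x_l0 u_l0]] := xu.
have /subsetPn [l] : ~~ (pencil x \subset [set l0]).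
  by apply/negP => /subset_leq_card; rewrite cards1 card_pencil ltnS leqNgt t_gt0.
rewrite !inE => /andP [l_line x_l] l_l0.
have y_l : y \notin l by apply: (notin_line l_line x_l); rewrite collinearC.
have [v v_l yv] := gq_collinear_exists l_line y_l.
exists v; first by apply/traceP; split; first exact: (line_collinear l_line x_l v_l).
apply: (contra_neq _ l_l0) => vu.
by apply: (line_uniq l_line l0_line (trace_neql u_tr)); rewrite // -vu.
Qed.
End Trace.

Section Pencil.
Variables c a1 a2 a3 : P.
Hypotheses (ca1 : col c a1) (ca2 : col c a2) (ca3 : col c a3).
Hypotheses (n12 : ~~ col a1 a2) (n13 : ~~ col a1 a3) (n23 : ~~ col a2 a3).

Lemma pencil_three : exists L1 L2 L3,
  [/\ [set L1; L2; L3] \subset pencil c, #|[set L1; L2; L3]| = 3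
    & [/\ a1 \in L1, a2 \in L2 & a3 \in L3]].
Proof.
have line_to a : col c a -> exists2 L, L \in pencil c & a \in L.
  by case/collinearP => L [L_line c_L a_L]; exists L; rewrite // inE L_line.
have [L1 L1c a1L] := line_to _ ca1.
have [L2 L2c a2L] := line_to _ ca2.
have [L3 L3c a3L] := line_to _ ca3.
have neqL a a' (L L' : {set P}) :
    L \in pencil c -> a \in L -> a' \in L' -> ~~ col a a' -> L != L'.
  rewrite inE => /andP [L_line _] a_L a'_L'; apply: contraNneq => eqL.
  by apply: (line_collinear L_line); rewrite // eqL.
exists L1, L2, L3; split=> //.
  by apply/subsetP => L; rewrite !in_setU !in_set1 -orbA => /or3P [] /eqP ->.
rewrite -setUA cardsU1 cards2 !inE negb_or.
rewrite (neqL _ _ _ _ L1c a1L a2L n12) (neqL _ _ _ _ L1c a1L a3L n13).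
by rewrite (neqL _ _ _ _ L2c a2L a3L n23).
Qed.

Lemma t_ge2 : 2 <= t.
Proof.
have [L1 [L2 [L3 [sub_c card_L _]]]] := pencil_three.
by move/subset_leq_card: sub_c; rewrite card_pencil card_L.
Qed.

Lemma pencil_covered : t = 2 -> forall p, col c p -> [|| col p a1, col p a2 | col p a3].
Proof.
move=> t2 p /collinearP [l [l_line c_l p_l]].
have [L1 [L2 [L3 [sub_c card_L [a1L a2L a3L]]]]] := pencil_three.
have : l \in [set L1; L2; L3].
  suff -> : [set L1; L2; L3] = pencil c by rewrite inE l_line.
  by apply/eqP; rewrite eqEcard sub_c card_L card_pencil t2.
rewrite !inE -orbA => /or3P [] /eqP eq_l; subst l; apply/or3P;
  [constructor 1 | constructor 2 | constructor 3];
  by rewrite collinearC; apply: (line_collinear l_line).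
Qed.

Lemma pencil_extra : 2 < t -> exists2 m, m \in pencil c &
  forall p, p \in m -> p != c -> [&& ~~ col p a1, ~~ col p a2 & ~~ col p a3].
Proof.
move=> t_gt2.
have [L1 [L2 [L3 [sub_c card_L [a1L a2L a3L]]]]] := pencil_three.
have /subsetPn [m m_c m_L] : ~~ (pencil c \subset [set L1; L2; L3]).
  by apply/negP => /subset_leq_card; rewrite card_pencil card_L ltnS leqNgt t_gt2.
exists m => // p p_m pc; move: m_c; rewrite inE => /andP [m_line c_m].
have ncol a L : L \in [set L1; L2; L3] -> a \in L -> a != c -> ~~ col p a.
  move=> L_S a_L ac; have := subsetP sub_c L L_S; rewrite inE => /andP [L_line c_L].
  have a_m : a \notin m.
    by apply/negP => a_m; case/negP: m_L; rewrite -(line_uniq L_line m_line ac).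
  apply/negP => pa; case/eqP: pc.
  apply: (gq_collinear_uniq m_line a_m p_m c_m); first by rewrite collinearC.
  exact: (line_collinear L_line).
have a1c : a1 != c by apply: (contraNneq _ n12) => ->.
have a2c : a2 != c by apply: (contraNneq _ n23) => ->.
have a3c : a3 != c by apply: (contraNneq _ n13) => ->; rewrite collinearC.
by rewrite (ncol a1 L1) ?(ncol a2 L2) ?(ncol a3 L3) // !inE eqxx ?orbT.
Qed.
End Pencil.
End GeneralizedQuadrangle.

Section Representation.
Variables (P : finType) (Lines : {set {set P}}) (t : nat).
Variables (G : Type) (mul : G -> G -> G) (e : G) (inv : G -> G) (r : P -> G).
Hypotheses (gq : is_GQ2t Lines t) (rep : is_representation Lines mul e inv r).
Hypothesis r_inj : is_faithful r.
Local Notation col := (collinear Lines).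
Local Notation trace := (trace Lines).
Local Notation "a * b" := (mul a b).

Let group_G : is_group mul e inv. Proof. by case: rep. Qed.

Lemma point_sq p : r p * r p = e.
Proof. by case: rep => _ /(_ p) []. Qed.

Lemma point_neq1 p : r p <> e.
Proof. by case: rep => _ /(_ p) []. Qed.

Lemma mul_points_eq1 p q : r p * r q = e -> p = q.
Proof. by rewrite -(point_sq q) => /(mulIg group_G)/r_inj. Qed.

Lemma mul_points_neq p q w : r p * r q = r w -> [/\ p != q, w != p & w != q].
Proof.
move=> pqw; split; apply/eqP => eq_pq.
- by apply: (@point_neq1 w); rewrite -pqw eq_pq point_sq.
- apply: (@point_neq1 q); apply: (mulgI group_G (a := r p)).
  by rewrite pqw eq_pq (mulg1 group_G).
- apply: (@point_neq1 p); apply: (mulIg group_G (a := r q)).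
  by rewrite pqw eq_pq (mul1g group_G).
Qed.

Lemma point_products p q w : r p * r q = r w ->
  [/\ r q * r p = r w, r p * r w = r q, r w * r p = r q,
      r q * r w = r p & r w * r q = r p].
Proof. by apply: (involution_products group_G); apply: point_sq. Qed.

Lemma mul_line l p q w : l \in Lines -> p \in l -> q \in l -> w \in l ->
  p != q -> w != p -> w != q -> r p * r q = r w.
Proof.
move=> l_line p_l q_l w_l pq wp wq.
rewrite eq_sym in wp; rewrite eq_sym in wq.
case: rep => _ _ _ /(_ l l_line p q w p_l q_l w_l pq wq wp) [_ closed _ _].
have [pq1 | [pqp | [pqq | //]]] :=
  closed (r p) (r q) (or_intror (or_introl erefl)) (or_intror (or_intror (or_introl erefl))).
- by case/eqP: pq; apply: mul_points_eq1.
- have [] := point_neq1 (p := q); apply: (mulgI group_G (a := r p)).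
  by rewrite pqp (mulg1 group_G).
- have [] := point_neq1 (p := p); apply: (mulIg group_G (a := r q)).
  by rewrite pqq (mul1g group_G).
Qed.

Lemma mul_collinear p q : p != q -> col p q -> exists w, r p * r q = r w.
Proof.
move=> pq /collinearP [l [l_line p_l q_l]].
have [w [w_l wp wq]] := line_third_point gq l_line p_l q_l pq.
by exists w; apply: (mul_line l_line).
Qed.

Lemma mul_points_line p q w : r p * r q = r w -> col p q ->
  exists l, [/\ l \in Lines, p \in l, q \in l & w \in l].
Proof.
move=> pqw /collinearP [l [l_line p_l q_l]]; exists l; split=> //.
have [pq _ _] := mul_points_neq pqw.
have [w' [w'_l w'p w'q]] := line_third_point gq l_line p_l q_l pq.
suff -> : w = w' by [].
by apply: r_inj; rewrite -pqw; apply: (mul_line l_line).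
Qed.

Lemma mul_points_collinear p q w : r p * r q = r w -> col p q -> col p w /\ col q w.
Proof.
move=> pqw /(mul_points_line pqw) [l [l_line p_l q_l w_l]].
by split; apply: (line_collinear l_line).
Qed.

Lemma triangle_mul p q v : col p q -> col p v -> col q v ->
  p != q -> v != p -> v != q -> r p * r q = r v.
Proof.
move=> pq pv qv pq' vp vq.
have [l [l_line p_l q_l v_l]] := triangle_on_line gq pq pv qv pq'.
exact: (mul_line l_line).
Qed.

Lemma collinear_third v p q w : r p * r q = r w -> col p q ->
  ~~ col v p -> ~~ col v q -> col v w.
Proof.
move=> pqw pq vp vq.
have [l [l_line p_l q_l w_l]] := mul_points_line pqw pq.
have [y y_l vy] := gq_collinear_exists gq l_line (notin_line l_line p_l vp).
have yp : y != p by apply: (contraNneq _ vp) => <-.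
have yq : y != q by apply: (contraNneq _ vq) => <-.
have [pq' _ _] := mul_points_neq pqw.
suff -> : w = y by [].
by apply: r_inj; rewrite -pqw; apply: (mul_line l_line).
Qed.

Lemma ncollinear_third v p q w : r p * r q = r w -> col p q ->
  col v q -> ~~ col v p -> ~~ col v w.
Proof.
move=> pqw pq vq vp; apply/negP => vw.
have [_ _ wq] := mul_points_neq pqw.
have [l [l_line p_l q_l w_l]] := mul_points_line pqw pq.
have v_l := notin_line l_line p_l vp.
by case/eqP: wq; apply: (gq_collinear_uniq gq l_line v_l).
Qed.

Lemma commuting_of_mul p q w : r p * r q = r w -> commuting mul (r p) (r q).
Proof.
by move=> pqw; have [qpw _ _ _ _] := point_products pqw; rewrite /commuting pqw qpw.
Qed.

Lemma commuting_collinear p q : col p q -> commuting mul (r p) (r q).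
Proof.
have [<- // | pq /(mul_collinear pq) [w /commuting_of_mul //]] := eqVneq p q.
Qed.

Lemma pair_prod_point p q w : r p * r q = r w -> forall b, b = (false, false) \/
  exists2 v, v \in [:: p; q; w] & pair_prod mul e (r p) (r q) b = r v.
Proof.
move=> pqw [[] []]; rewrite /pair_prod /prodf /=; [right; exists w | right; exists p
  | right; exists q | left]; rewrite ?inE ?eqxx ?orbT ?(mulg1 group_G) ?(mul1g group_G) //.
Qed.

Lemma ncollinear_mul p q w : ~~ col p q -> r p * r q = r w -> ~~ col p w.
Proof.
move=> npq pqw; apply/negP => pw.
have [_ pwq _ _ _] := point_products pqw.
by case/negP: npq; have [] := mul_points_collinear pwq pw.
Qed.

Lemma trace_mul p q w v : ~~ col p q -> r p * r q = r w ->
  v \in trace p q -> col w v.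
Proof.
move=> npq pqw v_tr; apply: contraT => nwv.
have pv' : p != v by rewrite eq_sym (trace_neql npq v_tr).
have qv' : q != v by rewrite eq_sym (trace_neqr npq v_tr).
have /traceP [pv qv] := v_tr.
have [a pva] := mul_collinear pv' pv.
have [b qvb] := mul_collinear qv' qv.
have [wpq _ _ _ _] := point_products pqw.
have nwp : ~~ col w p by rewrite collinearC (ncollinear_mul npq pqw).
have nwq : ~~ col w q by rewrite collinearC (ncollinear_mul _ wpq) // collinearC.
have wa := collinear_third pva pv nwp nwv.
have wb := collinear_third qvb qv nwq nwv.
have wab : r w * r a = r b.
  have [_ _ wpq' _ _] := point_products pqw.
  by rewrite -pva (mulgA group_G) wpq' qvb.
have [_ ab] := mul_points_collinear wab wa.
have [_ va] := mul_points_collinear pva pv.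
have [_ vb] := mul_points_collinear qvb qv.
have [_ _ av] := mul_points_neq pva.
have [_ _ bv] := mul_points_neq qvb.
have ba : b != a.
  apply: (contraNneq _ npq) => eq_ba.
  have : r p * r v = r q * r v by rewrite pva qvb eq_ba.
  by move/(mulIg group_G)/r_inj => ->; apply: collinear_refl gq _.
have vab : r v * r a = r b by apply: triangle_mul; rewrite // eq_sym.
have [_ _ _ vap _] := point_products pva.
have [qb _] := mul_points_collinear qvb qv.
by case/negP: npq; rewrite (r_inj (etrans (esym vap) vab)) collinearC.
Qed.

Lemma collinear_closure (S : G -> Prop) c c' p :
  (forall g h, S g -> S h -> S (g * h)) -> ~~ col c c' ->
  S (r c) -> (forall v, v \in trace c c' -> S (r v)) -> col c p -> S (r p).
Proof.
move=> S_mul ncc' S_c S_tr cp.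
have [<- // | cp'] := eqVneq c p.
have [c'p | nc'p] := boolP (col c' p); first by apply/S_tr/traceP.
have [w cpw] := mul_collinear cp' cp.
have nc'c : ~~ col c' c by rewrite collinearC.
have c'w := collinear_third cpw cp nc'c nc'p.
have [cw _] := mul_points_collinear cpw cp.
have [_ cwp _ _ _] := point_products cpw.
by rewrite -cwp; apply: S_mul => //; apply/S_tr/traceP.
Qed.

Section Configuration.
Variables x y z : P.
Hypotheses (nxy : ~~ col x y) (xyz : r x * r y = r z).

Lemma ncollinear_xz : ~~ col x z.
Proof. exact: ncollinear_mul nxy xyz. Qed.

Lemma ncollinear_yz : ~~ col y z.
Proof.
have [yxz _ _ _ _] := point_products xyz.
by rewrite (ncollinear_mul _ yxz) // collinearC.
Qed.

Lemma trace_collinear_z u : u \in trace x y -> col z u.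
Proof. exact: trace_mul nxy xyz. Qed.

Lemma trace_neqz u : u \in trace x y -> u != z.
Proof. by case/traceP=> xu _; apply: (contraNneq _ ncollinear_xz) => <-. Qed.

Lemma trace_far w u : ~~ col w x -> ~~ col w y -> ~~ col w z ->
  u \in trace x y -> col w u.
Proof.
move=> wx wy wz u_tr; apply: contraT => nwu.
have xu' : x != u by rewrite eq_sym (trace_neql nxy u_tr).
have yu' : y != u by rewrite eq_sym (trace_neqr nxy u_tr).
have /traceP [xu yu] := u_tr.
have [a xua] := mul_collinear xu' xu.
have [b yub] := mul_collinear yu' yu.
have wa := collinear_third xua xu wx nwu.
have wb := collinear_third yub yu wy nwu.
have abz : r a * r b = r z.
  rewrite -xua -yub (mulgACA group_G); last by apply: commuting_collinear; rewrite collinearC.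
  by rewrite point_sq (mulg1 group_G).
have nab : ~~ col a b.
  apply/negP => /(mul_points_collinear abz) [az _].
  have nzx : ~~ col z x by rewrite collinearC ncollinear_xz.
  by have := ncollinear_third xua xu (trace_collinear_z u_tr) nzx; rewrite collinearC az.
case/negP: wz; rewrite collinearC; apply: (trace_mul nab abz).
by apply/traceP; split; rewrite collinearC.
Qed.

Lemma trace_mul_closed u u' : u \in trace x y -> u' \in trace x y -> u != u' ->
  exists2 m, m \in trace x y & r u * r u' = r m.
Proof.
(* With a := x u and b := y u' one finds q := a b collinear with z, and the
   third point m of the line z q satisfies r m = r z r q = r u r u'. *)
move=> u_tr u'_tr uu'.
have /traceP [xu yu] := u_tr.
have /traceP [xu' yu'] := u'_tr.
have nzx : ~~ col z x by rewrite collinearC ncollinear_xz.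
have nzy : ~~ col z y by rewrite collinearC ncollinear_yz.
have nyx : ~~ col y x by rewrite collinearC.
have xu0 : x != u by rewrite eq_sym (trace_neql nxy u_tr).
have yu'0 : y != u' by rewrite eq_sym (trace_neqr nxy u'_tr).
have [ux u'x] : col u x /\ col u' x by split; rewrite collinearC.
have [a xua] := mul_collinear xu0 xu.
have [b yu'b] := mul_collinear yu'0 yu'.
have [uxa _ _ _ _] := point_products xua.
have nu'u : ~~ col u' u by apply: contra_neqN uu' => /(trace_collinear gq nxy u'_tr u_tr) ->.
have nya := ncollinear_third xua xu yu nyx.
have nu'a := ncollinear_third uxa ux u'x nu'u.
have ab : col a b by apply: (collinear_third yu'b yu'); rewrite collinearC.
have ab' : a != b by apply: (contraNneq _ nya) => ->; have [] := mul_points_collinear yu'b yu'.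
have [q abq] := mul_collinear ab' ab.
have nza := ncollinear_third xua xu (trace_collinear_z u_tr) nzx.
have nzb := ncollinear_third yu'b yu' (trace_collinear_z u'_tr) nzy.
have zq := collinear_third abq ab nza nzb.
have [aq _] := mul_points_collinear abq ab.
have zq' : z != q by apply: (contraNneq _ nza) => ->; rewrite collinearC.
have [m zqm] := mul_collinear zq' zq.
have uu'm : r u * r u' = r m.
  have zuu'q : r z * (r u * r u') = r q.
    rewrite -abq -xua -yu'b (mulgACA group_G) ?xyz //.
    by apply: commuting_collinear; rewrite collinearC.
  by rewrite -zqm -zuu'q (mulgA group_G) point_sq (mul1g group_G).
exists m => //.
have [baq _ _ _ _] := point_products abq.
have [xa _] := mul_points_collinear xua xu.
have [yb _] := mul_points_collinear yu'b yu'.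
have nxb := ncollinear_third yu'b yu' xu' nxy.
have ba : col b a by rewrite collinearC.
have nxq := ncollinear_third baq ba xa nxb.
have nyq := ncollinear_third abq ab yb nya.
apply/traceP; split.
- exact: (collinear_third zqm zq ncollinear_xz nxq).
- exact: (collinear_third zqm zq ncollinear_yz nyq).
Qed.

Lemma t_eq2 : t = 2.
Proof.
have [u u_tr] := trace_exists gq nxy.
have /traceP [xu yu] := u_tr.
have [ux uy] : col u x /\ col u y by rewrite !(collinearC _ u).
have uz : col u z by rewrite collinearC trace_collinear_z.
have [n_xz n_yz] := (ncollinear_xz, ncollinear_yz).
apply/eqP; rewrite eqn_leq (t_ge2 gq ux uy uz nxy n_xz n_yz) andbT leqNgt.
apply/negP => t_gt2.
have [m m_u m_far] := pencil_extra gq ux uy uz nxy n_xz n_yz t_gt2.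
move: m_u; rewrite inE => /andP [m_line u_m].
have [p [w [p_m w_m pu wu pw]]] := line_other_points gq m_line u_m.
have upw : r u * r p = r w by apply: (mul_line m_line); rewrite // eq_sym.
have [u2 u2_tr u2u] := trace_two gq nxy (ltnW (ltnW t_gt2)) u_tr.
have /and3P [px py pz] := m_far p p_m pu.
have /and3P [wx wy wz] := m_far w w_m wu.
have pu2 := trace_far px py pz u2_tr.
have wu2 := trace_far wx wy wz u2_tr.
have /traceP [x_u2 _] := u2_tr.
have u2p : u2 != p by apply: (contraNneq _ px) => <-; rewrite collinearC.
have u2w : u2 != w by apply: (contraNneq _ wx) => <-; rewrite collinearC.
have pw_col : col p w := line_collinear m_line p_m w_m.
have pwu2 := triangle_mul pw_col pu2 wu2 pw u2p u2w.
have [_ _ _ pwu _] := point_products upw.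
by case/eqP: u2u; apply: r_inj; rewrite -pwu2 pwu.
Qed.

Section OrderSixteen.
Variables u1 u2 u3 : P.
Hypotheses (u1_tr : u1 \in trace x y) (u2_tr : u2 \in trace x y) (u3_tr : u3 \in trace x y).
Hypothesis u123 : r u1 * r u2 = r u3.

Lemma trace_eq3 v : v \in trace x y -> v \in [:: u1; u2; u3].
Proof.
move=> v_tr; have /traceP [xv _] := v_tr.
have [u12 u31 u32] := mul_points_neq u123.
have [u13 u23] : u1 != u3 /\ u2 != u3 by rewrite !(eq_sym _ u3).
have x_u w : w \in trace x y -> col x w by case/traceP.
have ncol w w' : w \in trace x y -> w' \in trace x y -> w != w' -> ~~ col w w'.
  by move=> w_tr w'_tr; apply: contra_neqN => /(trace_collinear gq nxy w_tr w'_tr).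
have := pencil_covered gq (x_u _ u1_tr) (x_u _ u2_tr) (x_u _ u3_tr)
  (ncol _ _ u1_tr u2_tr u12) (ncol _ _ u1_tr u3_tr u13) (ncol _ _ u2_tr u3_tr u23) t_eq2 xv.
by rewrite mem_seq3 => /or3P [] vu; rewrite (trace_collinear gq nxy v_tr _ vu) ?eqxx ?orbT.
Qed.

Lemma points_covered p : [|| col x p, col y p | col z p].
Proof.
apply: contraT; rewrite !negb_or => /and3P [nxp nyp nzp].
have [npx npy npz] : [/\ ~~ col p x, ~~ col p y & ~~ col p z] by rewrite !(collinearC _ p).
have u1p : col u1 p by rewrite collinearC (trace_far npx npy npz u1_tr).
have /traceP [xu1 yu1] := u1_tr.
have [u1x u1y] : col u1 x /\ col u1 y by rewrite !(collinearC _ u1).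
have u1z : col u1 z by rewrite collinearC trace_collinear_z.
have := pencil_covered gq u1x u1y u1z nxy ncollinear_xz ncollinear_yz t_eq2 u1p.
by rewrite (negbTE npx) (negbTE npy) (negbTE npz).
Qed.

Let span := span4 mul e (r x) (r y) (r u1) (r u2).
Let in_span g := exists q, g = span q.

Let spanM : {morph span : q q' / xor4 q q' >-> q * q'}.
Proof.
have /traceP [xu1 yu1] := u1_tr.
have /traceP [xu2 yu2] := u2_tr.
apply: (span4M group_G); rewrite ?point_sq //;
  do ?[exact: commuting_of_mul xyz | exact: commuting_of_mul u123 | exact: commuting_collinear].
Qed.

Let in_span_mul g h : in_span g -> in_span h -> in_span (g * h).
Proof. by move=> [q ->] [q' ->]; exists (xor4 q q'); rewrite spanM. Qed.

Let generators_in_span : [/\ in_span (r x), in_span (r y), in_span (r u1) & in_span (r u2)].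
Proof.
rewrite /in_span /span /span4 /pair_prod /prodf; split.
- by exists ((true, false), (false, false)); rewrite /= !(mulg1 group_G).
- by exists ((false, true), (false, false)); rewrite /= (mul1g group_G) !(mulg1 group_G).
- by exists ((false, false), (true, false)); rewrite /= !(mul1g group_G) (mulg1 group_G).
- by exists ((false, false), (false, true)); rewrite /= !(mul1g group_G).
Qed.

Let trace_in_span v : v \in trace x y -> in_span (r v).
Proof.
have [_ _ span_u1 span_u2] := generators_in_span.
move/trace_eq3; rewrite mem_seq3 => /or3P [] /eqP -> //.
by rewrite -u123; apply: in_span_mul.
Qed.

Let points_in_span p : in_span (r p).
Proof.
have [span_x span_y _ _] := generators_in_span.
have nyx : ~~ col y x by rewrite collinearC.
have nzx : ~~ col z x by rewrite collinearC ncollinear_xz.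
have [_ xzy _ _ _] := point_products xyz.
case/or3P: (points_covered p).
- exact: (collinear_closure in_span_mul nxy).
- by apply: (collinear_closure in_span_mul nyx) => // v; rewrite traceC; apply: trace_in_span.
apply: (collinear_closure in_span_mul nzx); first by rewrite -xyz; apply: in_span_mul.
move=> v /traceP [zv xv]; apply/trace_in_span/traceP; split=> //.
by apply: (trace_mul ncollinear_xz xzy); apply/traceP.
Qed.

Let span_surj g : in_span g.
Proof.
case: rep => _ _ gen _; elim: (gen g) => [| p | a b _ [qa ->] _ [qb ->] | a _ [qa ->]].
- by exists quad0; rewrite /span (span4_0 group_G).
- exact: points_in_span.
- by exists (xor4 qa qb); rewrite spanM.
by exists qa; apply: (inv_involution group_G); rewrite -spanM xor4xx /span (span4_0 group_G).
Qed.

Let span_kernel q : span q = e -> q = quad0.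
Proof.
case: q => [b b']; rewrite /span /span4 {1}/prodf /=.
case: (pair_prod_point xyz b) => [-> | [v v_T ->]];
  case: (pair_prod_point u123 b') => [-> // | [w w_U ->]].
- by rewrite /pair_prod /prodf /= !(mul1g group_G) => /point_neq1.
- by rewrite /pair_prod /prodf /= !(mulg1 group_G) => /point_neq1.
move/mul_points_eq1 => eq_vw.
have w_tr : w \in trace x y by move: w_U; rewrite mem_seq3 => /or3P [] /eqP ->.
move: v_T; rewrite eq_vw mem_seq3 (negbTE (trace_neql nxy w_tr)).
by rewrite (negbTE (trace_neqr nxy w_tr)) (negbTE (trace_neqz w_tr)).
Qed.

Lemma order16 : has_card G 16.
Proof.
rewrite -card_quad; apply: (has_card_bijection (f := span)) span_surj.
exact: (xor4_morph_inj group_G spanM span_kernel).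
Qed.
End OrderSixteen.
End Configuration.
End Representation.

Theorem proposition3p3 (P : finType) (Lines : {set {set P}}) (t : nat)
  (G : Type) (mul : G -> G -> G) (e : G) (inv : G -> G) (r : P -> G) :
  is_GQ2t Lines t ->
  is_representation Lines mul e inv r ->
  is_faithful r ->
  ~ (t = 2 /\ has_card G 16) ->
  forall x y : P, x != y ->
  (exists z : P, mul (r x) (r y) = r z) ->
  collinear Lines x y.
Proof.
move=> gq rep r_inj not_exceptional x y _ [z xyz].
apply: contraT => nxy; exfalso; apply: not_exceptional.
have t2 := t_eq2 gq rep r_inj nxy xyz.
have [u1 u1_tr] := trace_exists gq nxy.
have t_gt0 : 0 < t by rewrite t2.
have [u2 u2_tr u21] := trace_two gq nxy t_gt0 u1_tr.
have u12 : u1 != u2 by rewrite eq_sym.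
have [u3 u3_tr u123] := trace_mul_closed gq rep r_inj nxy xyz u1_tr u2_tr u12.
by split; last exact: (order16 gq rep r_inj nxy xyz u1_tr u2_tr u3_tr u123).
Qed.
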